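(* A preordered group $(G,P_G)$ is an abelian object of the category $\mathsf{PreOrdGrp}$ if and only if $G$ is an abelian group and $P_G$ is a subgroup of $G$.
   Context: A preordered group is a pair $(G,P_G)$ with $G$ an additively written group and $P_G\subseteq G$ a submonoid closed under conjugation; morphisms are group homomorphisms $f$ with $f(P_G)\subseteq P_H$. This is $\mathsf{PreOrdGrp}$, a unital category (pointed, finitely complete, with $\langle1_X,0\rangle$, $\langle0,1_Y\rangle$ jointly strongly epimorphic into $X\times Y$); products are $(G\times H,P_G\times P_H)$. In a unital category, an object $X$ is commutative if there is $\phi\colon X\times X\to X$ with $\phi\circ\langle1_X,0\rangle=1_X=\phi\circ\langle0,1_X\rangle$ (this makes $X$ an internal commutative monoid), and $X$ is abelian if it is commutative and the corresponding internal commutative monoid is an internal abelian group. Equivalently, $X$ is abelian iff there is $\phi\colon X\times X\to X$ with $\phi\circ\langle0,1_X\rangle=1_X$ and $\phi\circ\langle1_X,1_X\rangle=0$. *)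

Set Implicit Arguments.

Record group := Group {
  gcar :> Type;
  gadd : gcar -> gcar -> gcar;
  gzero : gcar;
  gneg : gcar -> gcar;
  gaddA : forall x y z, gadd x (gadd y z) = gadd (gadd x y) z;
  gadd0l : forall x, gadd gzero x = x;
  gadd0r : forall x, gadd x gzero = x;
  gaddNl : forall x, gadd (gneg x) x = gzero;
  gaddNr : forall x, gadd x (gneg x) = gzero
}.

Arguments gadd {g}.
Arguments gzero {g}.
Arguments gneg {g}.

(** A preordered group (G, P_G): P_G a submonoid of G closed under conjugation. *)
Record preord_group := PreordGroup {
  pgrp :> group;
  ppos : pgrp -> Prop;
  ppos0 : ppos gzero;
  pposD : forall x y, ppos x -> ppos y -> ppos (gadd x y);
  pposJ : forall g x, ppos x -> ppos (gadd g (gadd x (gneg g)))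
}.

Definition is_group_hom (G H : group) (f : gcar G -> gcar H) : Prop :=
  forall x y, f (gadd x y) = gadd (f x) (f y).

Definition is_morphism (X Y : preord_group) (f : X -> Y) : Prop :=
  @is_group_hom X Y f /\ (forall x, ppos X x -> ppos Y (f x)).

Section Product.
Variables G H : group.
Definition prod_add (a b : G * H) : G * H :=
  (gadd (fst a) (fst b), gadd (snd a) (snd b)).
Definition prod_neg (a : G * H) : G * H := (gneg (fst a), gneg (snd a)).
Lemma prod_addA : forall x y z, prod_add x (prod_add y z) = prod_add (prod_add x y) z.
Proof. intros [] [] []; unfold prod_add; simpl; now rewrite !gaddA. Qed.
Lemma prod_add0l : forall x, prod_add (gzero, gzero) x = x.
Proof. intros []; unfold prod_add; simpl; now rewrite !gadd0l. Qed.
Lemma prod_add0r : forall x, prod_add x (gzero, gzero) = x.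
Proof. intros []; unfold prod_add; simpl; now rewrite !gadd0r. Qed.
Lemma prod_addNl : forall x, prod_add (prod_neg x) x = (gzero, gzero).
Proof. intros []; unfold prod_add, prod_neg; simpl; now rewrite !gaddNl. Qed.
Lemma prod_addNr : forall x, prod_add x (prod_neg x) = (gzero, gzero).
Proof. intros []; unfold prod_add, prod_neg; simpl; now rewrite !gaddNr. Qed.
Definition prod_group : group :=
  @Group (G * H) prod_add (gzero, gzero) prod_neg prod_addA prod_add0l prod_add0r prod_addNl prod_addNr.
End Product.

Section PProduct.
Variables X Y : preord_group.
Definition prod_pos (a : prod_group X Y) : Prop := ppos X (fst a) /\ ppos Y (snd a).
Lemma prod_pos0 : prod_pos (@gzero (prod_group X Y)).
Proof. split; apply ppos0. Qed.
Lemma prod_posD : forall x y, prod_pos x -> prod_pos y -> prod_pos (gadd x y).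
Proof. intros [] [] [] []; split; simpl; apply pposD; auto. Qed.
Lemma prod_posJ : forall g x, prod_pos x -> prod_pos (gadd g (gadd x (gneg g))).
Proof. intros [] [] []; split; simpl; apply pposJ; auto. Qed.
Definition prod_preord_group : preord_group :=
  @PreordGroup (prod_group X Y) prod_pos prod_pos0 prod_posD prod_posJ.
End PProduct.

(** Abelian object of PreOrdGrp: there is a morphism phi : X x X -> X with
    phi o <1,0> = 1 = phi o <0,1> (X is commutative, i.e. an internal commutative
    monoid), and this internal monoid is an internal abelian group, i.e. there is
    a morphism inv : X -> X with phi o <1,inv> = 0 = phi o <inv,1>.
    Equality of morphisms is pointwise equality of the underlying maps. *)
Definition abelian_object (X : preord_group) : Prop :=
  exists phi : prod_preord_group X X -> X,
    @is_morphism (prod_preord_group X X) X phi /\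
    (forall x, phi (x, gzero) = x) /\
    (forall x, phi (gzero, x) = x) /\
    exists inv : X -> X,
      @is_morphism X X inv /\
      (forall x, phi (x, inv x) = gzero) /\
      (forall x, phi (inv x, x) = gzero).

Set Implicit Arguments.

(* In [X x X] we have [(x, y) = (x, 0) + (0, y) = (0, y) + (x, 0)], so a
   homomorphism [phi] with [phi (x, 0) = x = phi (0, x)] is addition in both
   orders (Eckmann-Hilton): [G] is abelian and [phi] is its addition.  The
   inverse of the internal group is then forced to be negation, which preserves
   [P_G] exactly when [P_G] is closed under negation. *)

Section GroupFacts.
Context {G : group}.

Lemma gneg_unique (x y : G) : gadd x y = gzero -> y = gneg x.
Proof.
  intro Hxy.
  now rewrite <- (gadd0l _ y), <- (gaddNl _ x), <- gaddA, Hxy, gadd0r.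
Qed.

Lemma gnegD (x y : G) : gneg (gadd x y) = gadd (gneg y) (gneg x).
Proof.
  symmetry; apply gneg_unique.
  now rewrite <- gaddA, (gaddA _ y), gaddNr, gadd0l, gaddNr.
Qed.

Lemma prod_add_inl_inr (x y : G) :
  @gadd (prod_group G G) (x, gzero) (gzero, y) = (x, y).
Proof. simpl; unfold prod_add; simpl; now rewrite gadd0l, gadd0r. Qed.

Lemma prod_add_inr_inl (x y : G) :
  @gadd (prod_group G G) (gzero, y) (x, gzero) = (x, y).
Proof. simpl; unfold prod_add; simpl; now rewrite gadd0l, gadd0r. Qed.

Hypothesis gaddC : forall x y : G, gadd x y = gadd y x.

Lemma gadd_is_group_hom :
  @is_group_hom (prod_group G G) G (fun p => gadd (fst p) (snd p)).
Proof.
  intros [a b] [c d]; simpl; unfold prod_add; simpl.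
  now rewrite !gaddA, <- (gaddA _ a c), (gaddC c b), gaddA.
Qed.

Lemma gneg_is_group_hom : @is_group_hom G G gneg.
Proof. intros x y; now rewrite gnegD, gaddC. Qed.

End GroupFacts.

Section UnitalMorphism.
Variable X : preord_group.
Variable phi : prod_preord_group X X -> X.
Hypothesis phi_hom : @is_group_hom (prod_group X X) X phi.
Hypothesis phi_inl : forall x, phi (x, gzero) = x.
Hypothesis phi_inr : forall x, phi (gzero, x) = x.

Lemma unital_hom_addl (x y : X) : phi (x, y) = gadd x y.
Proof. now rewrite <- prod_add_inl_inr, phi_hom, phi_inl, phi_inr. Qed.

Lemma unital_hom_addr (x y : X) : phi (x, y) = gadd y x.
Proof. now rewrite <- prod_add_inr_inl, phi_hom, phi_inl, phi_inr. Qed.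

Lemma unital_hom_gaddC (x y : X) : gadd x y = gadd y x.
Proof. now rewrite <- unital_hom_addl, unital_hom_addr. Qed.

Lemma unital_hom_inverse {inv : X -> X}
    (phi_inv : forall x, phi (x, inv x) = gzero) (x : X) : inv x = gneg x.
Proof. apply gneg_unique; now rewrite <- unital_hom_addl. Qed.

End UnitalMorphism.

Theorem proposition3p7 (X : preord_group) :
  abelian_object X <->
  ((forall x y : X, gadd x y = gadd y x) /\
   (ppos X gzero /\
    (forall x y, ppos X x -> ppos X y -> ppos X (gadd x y)) /\
    (forall x, ppos X x -> ppos X (gneg x)))).
Proof.
  split.
  - intros [phi [[phi_hom _] [phi_inl [phi_inr [inv [[_ inv_pos] [inv_r _]]]]]]].
    split; [exact (unital_hom_gaddC phi_hom phi_inl phi_inr) |].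
    split; [exact (ppos0 X) | split; [exact (pposD X) |]].
    intros x Hx.
    rewrite <- (unital_hom_inverse phi_hom phi_inl phi_inr inv_r).
    now apply inv_pos.
  - intros [gaddC [_ [_ pos_neg]]].
    exists (fun p : prod_preord_group X X => gadd (fst p) (snd p)).
    split; [split; [exact (gadd_is_group_hom gaddC) |] |].
    { intros [a b] [Ha Hb]; now apply pposD. }
    split; [exact (gadd0r X) | split; [exact (gadd0l X) |]].
    exists gneg.
    split; [split; [exact (gneg_is_group_hom gaddC) | exact pos_neg] |].
    split; [exact (gaddNr X) | exact (gaddNl X)].
Qed.
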